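(* Let $F$ be a minimally unsatisfiable clause-set with $\mathrm{singind}(F)=1$. 1. If $F$ has at least two singular variables, then: (a) every singular variable of $F$ is non-1-singular; (b) there is a clause $C\in F$ containing every singular literal of $F$; (c) if $F$ is eventually saturated, then $F$ has exactly two singular variables. 2. If $F$ is eventually saturated, then any two elements of $\mathrm{sDP}(F)$ are isomorphic.
   Context: Literals are variables $v$ and complements $\overline{v}$; a clause is a finite set of literals with no complementary pair; a clause-set is a finite set of clauses; $\mathrm{var}(F)$ is the set of variables of $F$; $\mathrm{ldeg}_F(x)$ is the number of clauses of $F$ containing literal $x$. $\mathrm{DP}_v(F) := \{C \in F : v \notin \mathrm{var}(C)\} \cup \{(C \cup D)\setminus\{v,\overline{v}\} : C, D \in F,\ C \cap \overline{D} = \{v\}\}$; $\mathrm{DP}_{v_1,\dots,v_k}(F)$ applies these in order. A variable $v$ is singular for $F$ if $\min(\mathrm{ldeg}_F(v),\mathrm{ldeg}_F(\overline{v}))=1$; 1-singular if $\mathrm{ldeg}_F(v)=\mathrm{ldeg}_F(\overline{v})=1$; non-1-singular if singular but not 1-singular; a singular literal is a literal $x$ of a singular variable with $\mathrm{ldeg}_F(x)=1$; $F$ is nonsingular if it has no singular variables. For minimally unsatisfiable $F$, a tuple $(v_1,\dots,v_n)$ is singular if each $v_i$ is singular for $\mathrm{DP}_{v_1,\dots,v_{i-1}}(F)$, and maximal if $\mathrm{DP}_{v_1,\dots,v_n}(F)$ is nonsingular; $\mathrm{singind}(F)$ is the minimal length of a maximal singular tuple. $\mathrm{sDP}(F)$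 is the set of nonsingular minimally unsatisfiable clause-sets obtainable from $F$ by zero or more steps $G\leadsto\mathrm{DP}_v(G)$ with $v$ singular for $G$. A minimally unsatisfiable $G$ is saturated if for every $C\in G$ and literal $y$ with $\mathrm{var}(y)\in\mathrm{var}(G)\setminus\mathrm{var}(C)$, $(G\setminus\{C\})\cup\{C\cup\{y\}\}$ is satisfiable; $F$ is eventually saturated if every element of $\mathrm{sDP}(F)$ is saturated. Clause-sets are isomorphic if a complement-preserving bijection on literals maps the clauses of one exactly onto the clauses of the other. *)

From HB Require Import structures.
From mathcomp Require Import all_boot all_order.
From mathcomp Require Import finmap.
Set Implicit Arguments. Unset Strict Implicit. Unset Printing Implicit Defensive.
Local Open Scope fset_scope.

(* Variables are natural numbers; a literal is a pair (v, b):
   (v, true) is the positive literal v, (v, false) is its complement. *)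
Definition lit := (nat * bool)%type.
Definition comp (x : lit) : lit := (x.1, ~~ x.2).
Definition pos (v : nat) : lit := (v, true).
Definition neg (v : nat) : lit := (v, false).

Definition clause := {fset lit}.
Definition clauseset := {fset clause}.

Definition clause_ok (C : clause) : Prop := forall x, x \in C -> comp x \notin C.
Definition clauseset_ok (F : clauseset) : Prop := forall C, C \in F -> clause_ok C.

Definition varC (C : clause) : {fset nat} := [fset x.1 | x in C].
Definition varF (F : clauseset) : {fset nat} := \bigcup_(C <- F) varC C.

Definition ldeg (F : clauseset) (x : lit) : nat := #|` [fset C in F | x \in C] |.

Definition DP (v : nat) (F : clauseset) : clauseset :=
  [fset C in F | v \notin varC C] `|`
  [fset (C `|` D) `\` [fset pos v; neg v] | C in F, D in F
     & C `&` [fset comp y | y in D] == [fset pos v]].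

Definition DPs (vs : seq nat) (F : clauseset) : clauseset :=
  foldl (fun G v => DP v G) F vs.

Definition sat_lit (f : nat -> bool) (x : lit) : bool := f x.1 == x.2.
Definition satisfiable (F : clauseset) : Prop :=
  exists f : nat -> bool, forall C, C \in F -> exists2 x, x \in C & sat_lit f x.

Definition MU (F : clauseset) : Prop :=
  clauseset_ok F /\ ~ satisfiable F /\ (forall G, G `<` F -> satisfiable G).

Definition singular (F : clauseset) (v : nat) : Prop :=
  minn (ldeg F (pos v)) (ldeg F (neg v)) = 1.
Definition one_singular (F : clauseset) (v : nat) : Prop :=
  ldeg F (pos v) = 1 /\ ldeg F (neg v) = 1.
Definition non_one_singular (F : clauseset) (v : nat) : Prop :=
  singular F v /\ ~ one_singular F v.
Definition singular_lit (F : clauseset) (x : lit) : Prop :=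
  singular F x.1 /\ ldeg F x = 1.
Definition nonsingular (F : clauseset) : Prop := forall v, ~ singular F v.

Definition singular_tuple (F : clauseset) (vs : seq nat) : Prop :=
  forall i, i < size vs -> singular (DPs (take i vs) F) (nth 0 vs i).
Definition maximal_singular_tuple (F : clauseset) (vs : seq nat) : Prop :=
  singular_tuple F vs /\ nonsingular (DPs vs F).

Definition singind_eq (F : clauseset) (n : nat) : Prop :=
  (exists vs, maximal_singular_tuple F vs /\ size vs = n) /\
  (forall vs, maximal_singular_tuple F vs -> n <= size vs).

Inductive sDP_reach (F : clauseset) : clauseset -> Prop :=
| sDP_refl : sDP_reach F F
| sDP_step G v : sDP_reach F G -> singular G v -> sDP_reach F (DP v G).

Definition in_sDP (F G : clauseset) : Prop :=
  sDP_reach F G /\ nonsingular G /\ MU G.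

Definition saturated (G : clauseset) : Prop :=
  MU G /\
  forall C y, C \in G -> y.1 \in varF G -> y.1 \notin varC C ->
    satisfiable ((G `\ C) `|` [fset C `|` [fset y]]).

Definition eventually_saturated (F : clauseset) : Prop :=
  forall G, in_sDP F G -> saturated G.

Definition isomorphic (F G : clauseset) : Prop :=
  exists f : lit -> lit, bijective f /\ (forall x, f (comp x) = comp (f x)) /\
    [fset (f @` (C : clause)) | C in F] = G.

(** Since singind(F) = 1, some singular literal x, occurring only in the clause C0,
    has a nonsingular DP_{x.1}(F); this clause-set consists of C0 resolved with
    the clauses containing comp x together with the clauses not touching x.1, and it
    is again minimally unsatisfiable.  A singular literal y of another variable lies
    in C0, since otherwise y would still be singular after the elimination;
    comparing literal degrees before and after the elimination then rules out
    1-singular variables.  If DP_{x.1}(F) is saturated, every clause containing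
    comp z for such a z contains all of C0 except x and z; two such literals y, z
    are thus impossible, as a clause containing comp z would contain y, whose only
    clause C0 contains z.  Saturation of both eliminations makes the renaming
    x -> comp y, y -> comp x an isomorphism between DP_{x.1}(F) and DP_{y.1}(F), and
    these are the only nonsingular results of singular DP reduction. *)

From mathcomp Require Import all_boot all_order.
From mathcomp Require Import finmap.
From mathcomp Require Import zify.
Set Implicit Arguments. Unset Strict Implicit. Unset Printing Implicit Defensive.
Local Open Scope fset_scope.

Lemma compK : involutive comp.
Proof. by case=> u b; rewrite /comp /= negbK. Qed.

Lemma var_comp x : (comp x).1 = x.1.
Proof. by []. Qed.

Lemma sat_lit_comp f x : sat_lit f (comp x) = ~~ sat_lit f x.
Proof. by rewrite /sat_lit /comp /=; case: (f x.1); case: x.2. Qed.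

Lemma varCP u C : reflect (exists2 x, x \in C & x.1 = u) (u \in varC C).
Proof.
apply: (iffP idP) => [/imfsetP [x /= xC ->]|[x xC <-]]; first by exists x.
by apply/imfsetP; exists x.
Qed.

Lemma mem_varC x C : x \in C -> x.1 \in varC C.
Proof. by move=> xC; apply/varCP; exists x. Qed.

Lemma same_var_lit x y : x.1 = y.1 -> y = x \/ y = comp x.
Proof. by case: x y => u b [u' b'] /= ->; case: b; case: b'; rewrite /comp /=; auto. Qed.

Lemma neq_var_lit x l : l != x -> l != comp x -> l.1 != x.1.
Proof.
move=> lx lcx; apply/eqP => e.
by case: (same_var_lit (esym e)) => el; move: lx lcx; rewrite el eqxx.
Qed.

Lemma var_lit_neq x l : l.1 != x.1 -> l != x /\ l != comp x.
Proof. by move=> h; split; apply/eqP => e; move: h; rewrite e ?var_comp eqxx. Qed.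

Lemma in_comp_fset l (D : clause) : (l \in [fset comp y | y in D]) = (comp l \in D).
Proof.
apply/imfsetP/idP => [[y /= yD ->]|clD]; first by rewrite compK.
by exists (comp l); rewrite ?compK.
Qed.

Lemma in_fset_sep (F : clauseset) (P : pred clause) C :
  (C \in [fset D in F | P D]) = (C \in F) && P C.
Proof. by rewrite !inE. Qed.

Lemma ldeg_gt0P (F : clauseset) z : reflect (exists2 C, C \in F & z \in C) (0 < ldeg F z).
Proof.
rewrite /ldeg cardfs_gt0; apply: (iffP (fset0Pn _)) => [[C]|[C CF zC]].
  by rewrite in_fset_sep => /andP [CF zC]; exists C.
by exists C; rewrite in_fset_sep CF zC.
Qed.

Lemma ldeg1_uniq (F : clauseset) y C D : ldeg F y = 1 -> C \in F -> y \in C ->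
  D \in F -> y \in D -> D = C.
Proof.
move=> /eqP /cardfs1P [C0 E] CF yC DF yD.
have : C \in [fset C in F | y \in C] by rewrite in_fset_sep CF yC.
have : D \in [fset C in F | y \in C] by rewrite in_fset_sep DF yD.
by rewrite E !in_fset1 => /eqP -> /eqP ->.
Qed.

(* The side condition [C `&` [fset comp y | y in D] == [fset x]] of [DP], unfolded. *)
Definition clash (C D : clause) x :=
  [/\ x \in C, comp x \in D & forall l, l \in C -> comp l \in D -> l = x].

Lemma clashP (C D : clause) x :
  reflect (clash C D x) (C `&` [fset comp y | y in D] == [fset x]).
Proof.
apply: (iffP eqP) => [E|[xC cxD uniq]].
  have : x \in C `&` [fset comp y | y in D] by rewrite E in_fset1.
  rewrite in_fsetI in_comp_fset => /andP [xC cxD]; split=> // l lC clD.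
  have : l \in C `&` [fset comp y | y in D] by rewrite in_fsetI in_comp_fset lC clD.
  by rewrite E in_fset1 => /eqP.
apply/fsetP => l; rewrite in_fsetI in_comp_fset in_fset1.
by apply/andP/eqP => [[lC clD]|->]; [exact: uniq|].
Qed.

Lemma clash_sym C D x : clash C D x -> clash D C (comp x).
Proof.
move=> [xC cxD uniq]; split; rewrite ?compK // => l lD clC.
by rewrite -[l]compK (uniq _ clC) ?compK.
Qed.

Lemma pos_neg_var x : [fset pos x.1; neg x.1] = [fset x; comp x] /\
  (x = pos x.1 \/ x = neg x.1).
Proof.
case: x => u [] /=; rewrite /pos /neg /comp //=; split; auto.
by apply/fsetP => l; rewrite !in_fset2 orbC.
Qed.

Lemma in_DP (F : clauseset) x Z :
  Z \in DP x.1 F <-> (Z \in F /\ x.1 \notin varC Z) \/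
    exists C D, [/\ C \in F, D \in F, clash C D x &
                  Z = (C `|` D) `\` [fset x; comp x]].
Proof.
have [Epn Ex] := pos_neg_var x.
have pos_comp : x = neg x.1 -> comp x = pos x.1 by move->.
rewrite /DP Epn in_fsetU in_fset_sep; split.
  case/orP => [/andP [ZF nZ]|/imfset2P [C CF [D /=]]]; first by left.
  rewrite !inE => /andP [DF /clashP cl] ->; right.
  case: Ex => Ex; first by exists C, D; rewrite -Ex in cl.
  exists D, C; rewrite fsetUC; split=> //.
  by move/clash_sym: cl; rewrite -(pos_comp Ex) compK.
case => [[-> ->] //|[C [D [CF DF cl ->]]]].
apply/orP; right; apply/imfset2P; case: Ex => Ex.
  by exists C => //; exists D; rewrite // !inE DF /=; apply/clashP; rewrite -Ex.
exists D => //; exists C; last by rewrite fsetUC.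
by rewrite !inE CF /=; apply/clashP; rewrite -(pos_comp Ex); exact: clash_sym.
Qed.

Definition satC (f : nat -> bool) (C : clause) := exists2 l, l \in C & sat_lit f l.

Definition upd (f : nat -> bool) u b := fun u' => if u' == u then b else f u'.

Lemma sat_upd f u b l :
  sat_lit (upd f u b) l = if l.1 == u then b == l.2 else sat_lit f l.
Proof. by rewrite /sat_lit /upd; case: (l.1 == u). Qed.

Lemma sat_upd_comp f x : sat_lit (upd f x.1 (~~ x.2)) (comp x).
Proof. by rewrite sat_upd /= eqxx. Qed.

Lemma sat_upd_other f x b l : l != x -> l != comp x ->
  sat_lit (upd f x.1 b) l = sat_lit f l.
Proof. by move=> lx lcx; rewrite sat_upd (negbTE (neq_var_lit lx lcx)). Qed.

Lemma MU_clause_ok F C l : MU F -> C \in F -> l \in C -> comp l \notin C.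
Proof. by move=> [ok _] CF; apply: ok. Qed.

Lemma MU_critical F Z : MU F -> Z \in F ->
  exists f, (forall C, C \in F -> C != Z -> satC f C) /\ ~ satC f Z.
Proof.
move=> [_ [unsat minimal]] ZF.
have [f Hf] := minimal _ (fproperD1 ZF).
have satF C : C \in F -> C != Z -> satC f C by move=> CF CZ; apply: Hf; rewrite in_fsetD1 CZ CF.
exists f; split=> // satZ; apply: unsat; exists f => C CF.
by case: (eqVneq C Z) => [->|]; [exact: satZ|exact: satF].
Qed.

(** * DP on a literal occurring in a single clause *)

Definition sole_clause (F : clauseset) (x : lit) (C0 : clause) :=
  [/\ MU F, C0 \in F, x \in C0 & forall C, C \in F -> x \in C -> C = C0].

Lemma sole_clause_of F x : MU F -> ldeg F x = 1 -> exists C0, sole_clause F x C0.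
Proof.
move=> mu x1; have /ldeg_gt0P [C0 C0F xC0] : 0 < ldeg F x by rewrite x1.
by exists C0; split=> // C CF xC; exact: ldeg1_uniq x1 C0F xC0 CF xC.
Qed.

Definition resolvent x (C0 D : clause) : clause :=
  if comp x \in D then (C0 `|` D) `\` [fset x; comp x] else D.

Lemma in_resolution x (C0 D : clause) l :
  (l \in (C0 `|` D) `\` [fset x; comp x]) =
  [&& l != x, l != comp x & (l \in C0) || (l \in D)].
Proof. by rewrite !inE negb_or -andbA. Qed.

Lemma in_resolvent x C0 D z : z.1 != x.1 ->
  (z \in resolvent x C0 D) = (z \in D) || ((comp x \in D) && (z \in C0)).
Proof.
move=> zx; have [zx1 zx2] := var_lit_neq zx.
rewrite /resolvent; case: (comp x \in D); rewrite ?in_resolution ?zx1 ?zx2 /= ?orbF //.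
by rewrite orbC.
Qed.

Section SoleClause.

Variables (F : clauseset) (x : lit) (C0 : clause).
Hypothesis hx : sole_clause F x C0.

Lemma sole_ldeg : ldeg F x = 1.
Proof.
have [_ C0F xC0 uniq] := hx; rewrite /ldeg -(cardfs1 C0); congr #|` _|.
apply/fsetP => C; rewrite in_fset_sep in_fset1.
by apply/andP/eqP => [[CF xC]|->]; [exact: uniq|].
Qed.

Lemma sole_comp_notin : comp x \notin C0.
Proof. by have [mu C0F xC0 _] := hx; exact: MU_clause_ok mu C0F xC0. Qed.

Lemma sole_notin D : D \in F -> D != C0 -> x \notin D.
Proof. by have [_ _ _ uniq] := hx; move=> DF DC0; apply: contra_neqN DC0 => /(uniq _ DF). Qed.

Lemma sole_var_notin D : D \in F -> D != C0 -> comp x \notin D -> x.1 \notin varC D.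
Proof.
move=> DF DC0 cxD; apply/negP => /varCP [l lD /esym/same_var_lit [e|e]]; rewrite e in lD.
  by rewrite (negbTE (sole_notin DF DC0)) in lD.
by rewrite lD in cxD.
Qed.

(* Otherwise flipping x would satisfy all of F: C0 keeps a true literal,
   and x occurs in no other clause. *)
Lemma critical_sole D f : D \in F -> comp x \in D ->
  (forall C, C \in F -> C != D -> satC f C) -> ~ satC f D ->
  sat_lit f x /\ forall l, l \in C0 -> l != x -> ~~ sat_lit f l.
Proof.
move=> DF cxD satF unsatD; have [[_ [unsat _]] C0F xC0 _] := hx.
have sx : sat_lit f x.
  by apply/negPn/negP => nsx; apply: unsatD; exists (comp x); rewrite ?sat_lit_comp.
split=> // l lC0 lx; apply/negP => sl; apply: unsat.
exists (upd f x.1 (~~ x.2)) => C CF.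
have [cxC|cxC] := boolP (comp x \in C); first by exists (comp x); rewrite ?sat_upd_comp.
have [->|CC0] := eqVneq C C0.
  exists l; rewrite // sat_upd_other //.
  by apply: contraNneq sole_comp_notin => <-.
have CD : C != D by apply: contraNneq cxC => ->.
have [l' l'C sl'] := satF C CF CD.
exists l'; rewrite // sat_upd_other //.
  by apply: contraTneq l'C => ->; exact: sole_notin.
by apply: contraNneq cxC => <-.
Qed.

Lemma sole_clash D : D \in F -> comp x \in D -> clash C0 D x.
Proof.
move=> DF cxD; have [mu _ xC0 _] := hx; split=> // l lC0 clD.
have [f [satF unsatD]] := MU_critical mu DF.
have [_ nsat] := critical_sole DF cxD satF unsatD.
apply/eqP/negPn/negP => lx; apply: unsatD; exists (comp l) => //.
by rewrite sat_lit_comp nsat.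
Qed.

Lemma resolvent_sat D0 D f : D0 \in F -> D0 != C0 ->
  (forall C, C \in F -> C != D0 -> satC f C) ->
  D \in F -> D != C0 -> D != D0 -> satC f (resolvent x C0 D).
Proof.
move=> D0F D0C0 satF DF DC0 DD0; have [mu C0F xC0 _] := hx.
have [l lD sl] := satF D DF DD0.
rewrite /resolvent; case: ifP => cxD; last by exists l.
have [elx|lcx] := eqVneq l (comp x).
  have [l' l'C0 sl'] : satC f C0 by apply: satF; rewrite // eq_sym.
  exists l'; rewrite // in_resolution l'C0 orTb andbT.
  apply/andP; split; last by apply: contraNneq sole_comp_notin => <-.
  by apply: contraTneq sl' => ->; rewrite -sat_lit_comp -elx.
exists l; rewrite // in_resolution lD orbT lcx !andbT.
by apply/eqP => elx; move: (MU_clause_ok mu DF cxD); rewrite compK -elx lD.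
Qed.

Lemma resolvent_unsat D0 f : D0 \in F ->
  (forall C, C \in F -> C != D0 -> satC f C) -> ~ satC f D0 ->
  ~ satC f (resolvent x C0 D0).
Proof.
move=> D0F satF unsatD; rewrite /resolvent; case: ifP => // cxD.
have [_ nsat] := critical_sole D0F cxD satF unsatD.
move=> [l]; rewrite in_resolution => /and3P [lx _ /orP [lC0|lD]] sl.
  by move: (nsat _ lC0 lx); rewrite sl.
by apply: unsatD; exists l.
Qed.

Lemma resolvent_inj : {in F `\ C0 &, injective (resolvent x C0)}.
Proof.
move=> D1 D2; rewrite !in_fsetD1 => /andP [D1C0 D1F] /andP [D2C0 D2F] e.
apply/eqP/negPn/negP => D12; have [mu _ _ _] := hx.
have [f [satF unsatD]] := MU_critical mu D1F.
apply: (resolvent_unsat D1F satF unsatD); rewrite e.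
by apply: (resolvent_sat D1F D1C0 satF D2F D2C0); rewrite eq_sym.
Qed.

Lemma DP_sole : DP x.1 F = [fset resolvent x C0 D | D in F `\ C0].
Proof.
have [mu C0F xC0 uniq] := hx.
apply/fsetP => Z; apply/idP/imfsetP => [/in_DP [[ZF nZ]|[C [D [CF DF [xC cxD _] ->]]]]|].
- exists Z; rewrite /= ?in_fsetD1 ?ZF ?andbT.
    by apply: contraNneq nZ => ->; exact: mem_varC.
  by rewrite /resolvent ifN //; apply: contra nZ; rewrite -(var_comp x); exact: mem_varC.
- exists D; first by rewrite /= in_fsetD1 DF andbT; apply: contraNneq sole_comp_notin => <-.
  by rewrite /resolvent cxD (uniq C CF xC).
- move=> [D /=]; rewrite in_fsetD1 => /andP [DC0 DF] ->; apply/in_DP.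
  rewrite /resolvent; case: ifP => cxD; last by left; rewrite DF sole_var_notin ?cxD.
  by right; exists C0, D; split=> //; exact: sole_clash.
Qed.

Lemma DP_soleP Z :
  reflect (exists2 D, D \in F & D != C0 /\ Z = resolvent x C0 D) (Z \in DP x.1 F).
Proof.
rewrite DP_sole; apply: (iffP idP) => [/imfsetP [D /=]|[D DF [DC0 ->]]].
  by rewrite in_fsetD1 => /andP [DC0 DF] ->; exists D.
by apply/imfsetP; exists D; rewrite //= in_fsetD1 DC0.
Qed.

Lemma clause_ok_resolvent D : D \in F -> clause_ok (resolvent x C0 D).
Proof.
have [[ok _] C0F _ _] := hx; move=> DF l.
rewrite /resolvent; case: ifP => cxD; last exact: ok.
have [_ _ clash_x] := sole_clash DF cxD.
rewrite !in_resolution => /and3P [lx lcx /orP [lC0|lD]].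
all: apply/negP => /and3P [_ _ /orP [clC0|clD]].
- by move: (ok _ C0F _ lC0); rewrite clC0.
- by move: lx; rewrite (clash_x _ lC0 clD) eqxx.
- by move: lcx; rewrite -(clash_x _ clC0) ?compK // eqxx.
- by move: (ok _ DF _ lD); rewrite clD.
Qed.

Lemma DP_sole_unsat : ~ satisfiable (DP x.1 F).
Proof.
have [[_ [unsat _]] C0F xC0 _] := hx.
move=> [g satg]; apply: unsat.
have satR D : D \in F -> D != C0 -> satC g (resolvent x C0 D).
  by move=> DF DC0; apply: satg; apply/DP_soleP; exists D.
have notx (C : clause) l : C \in F -> C != C0 -> l \in C -> l != x.
  by move=> CF CC0 lC; apply: contraNneq (sole_notin CF CC0) => <-.
have notcx (C : clause) l : comp x \notin C -> l \in C -> l != comp x.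
  by move=> cxC lC; apply: contraNneq cxC => <-.
have [/hasP [l lC0 /andP [lx sl]]|/hasPn C0false] :=
  boolP (has (fun l => (l != x) && sat_lit g l) C0).
- exists (upd g x.1 (~~ x.2)) => C CF.
  have [cxC|cxC] := boolP (comp x \in C); first by exists (comp x); rewrite ?sat_upd_comp.
  have [->|CC0] := eqVneq C C0.
    by exists l; rewrite // sat_upd_other // (notcx _ _ sole_comp_notin lC0).
  have := satR C CF CC0; rewrite /resolvent (negbTE cxC) => -[l' l'C sl'].
  by exists l'; rewrite // sat_upd_other // (notx C, notcx C).
- exists (upd g x.1 x.2) => C CF.
  have [->|CC0] := eqVneq C C0; first by exists x; rewrite // sat_upd !eqxx.
  have [l' + sl'] := satR C CF CC0; rewrite /resolvent; case: ifP => cxC.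
    rewrite in_resolution => /and3P [l'x l'cx /orP [l'C0|l'C]].
      by move: (C0false _ l'C0); rewrite l'x sl'.
    by exists l'; rewrite // sat_upd_other.
  by move=> l'C; exists l'; rewrite // sat_upd_other // (notx C, notcx C) ?cxC.
Qed.

Lemma MU_DP_sole : MU (DP x.1 F).
Proof.
have [mu _ _ _] := hx; split; [|split; first exact: DP_sole_unsat].
  by move=> Z /DP_soleP [D DF [_ ->]]; exact: clause_ok_resolvent.
move=> G; rewrite fproperE => /andP [GH /fsubsetPn [Z /DP_soleP [D0 D0F [D0C0 EZ]] ZG]].
have [f [satF _]] := MU_critical mu D0F.
exists f => C CG; have /DP_soleP [D DF [DC0 EC]] := fsubsetP GH C CG.
rewrite EC; apply: (resolvent_sat D0F D0C0 satF DF DC0).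
by apply: contraNneq ZG => DD0; rewrite EZ -DD0 -EC.
Qed.

Lemma ldeg_DP_sole z : z.1 != x.1 ->
  ldeg (DP x.1 F) z =
  #|` [fset D in F `\ C0 | (z \in D) || ((comp x \in D) && (z \in C0))] |.
Proof.
move=> zx; rewrite /ldeg DP_sole.
have -> : [fset C in [fset resolvent x C0 D | D in F `\ C0] | z \in C] =
          resolvent x C0 @` [fset D in F `\ C0 | z \in resolvent x C0 D].
  apply/fsetP => Z; rewrite in_fset_sep; apply/andP/imfsetP.
    by move=> [/imfsetP [D DS ->] zZ]; exists D; rewrite //= in_fset_sep DS.
  move=> [D /=]; rewrite in_fset_sep => /andP [DS zD] ->; split=> //.
  by apply/imfsetP; exists D.
rewrite card_in_imfset; last first.
  by move=> D1 D2; rewrite !in_fset_sep => /andP [D1S _] /andP [D2S _]; exact: resolvent_inj.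
by congr #|` _|; apply/fsetP => D; rewrite !in_fset_sep in_resolvent.
Qed.

Lemma ldeg_DP_sole_var z : z.1 = x.1 -> ldeg (DP x.1 F) z = 0.
Proof.
move=> /esym/same_var_lit zx; apply/eqP; rewrite cardfs_eq0; apply/eqP/fsetP => Z.
rewrite in_fset_sep in_fset0; apply/negP => /andP [/DP_soleP [D DF [DC0 ->]]].
rewrite /resolvent; case: ifP => cxD.
  by rewrite in_resolution => /and3P [zx1 zx2 _]; case: zx => e; rewrite e eqxx in zx1 zx2.
by case: zx => ->; [rewrite (negbTE (sole_notin DF DC0))|rewrite cxD].
Qed.

Lemma ldeg_DP_sole_notin z : z.1 != x.1 -> z \notin C0 -> ldeg (DP x.1 F) z = ldeg F z.
Proof.
move=> zx zC0; rewrite (ldeg_DP_sole zx) /ldeg; congr #|` _|; apply/fsetP => D.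
rewrite !in_fset_sep in_fsetD1 (negbTE zC0) andbF orbF.
by have [->|] := eqVneq D C0; rewrite /= ?(negbTE zC0) ?andbF.
Qed.

Lemma ldeg_DP_sole_ge z : z.1 != x.1 -> z \in C0 -> ldeg F (comp x) <= ldeg (DP x.1 F) z.
Proof.
move=> zx zC0; rewrite (ldeg_DP_sole zx) /ldeg; apply: fsubset_leq_card.
apply/fsubsetP => D; rewrite !in_fset_sep in_fsetD1 => /andP [DF cxD].
rewrite DF cxD zC0 orbT !andbT.
by apply: contraNneq sole_comp_notin => <-.
Qed.

Lemma ldeg_DP_sole_uniq z : z.1 != x.1 -> z \in C0 ->
  (forall D, D \in F -> z \in D -> D = C0) -> ldeg (DP x.1 F) z = ldeg F (comp x).
Proof.
move=> zx zC0 zuniq; rewrite (ldeg_DP_sole zx) /ldeg; congr #|` _|; apply/fsetP => D.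
rewrite !in_fset_sep in_fsetD1 zC0 andbT.
have [->|DC0] /= := eqVneq D C0; first by rewrite (negbTE sole_comp_notin) andbF.
case DF: (D \in F) => //=; case zD: (z \in D) => //=.
by rewrite (zuniq D DF zD) eqxx in DC0.
Qed.

Lemma ldeg_DP_sole_gt0 z : 0 < ldeg F (comp x) -> z.1 != x.1 ->
  0 < ldeg F z -> 0 < ldeg (DP x.1 F) z.
Proof.
move=> cx zx zF; have [zC0|zC0] := boolP (z \in C0).
  exact: leq_trans cx (ldeg_DP_sole_ge zx zC0).
by rewrite ldeg_DP_sole_notin.
Qed.

Lemma resolvent_in_DP D : D \in F -> D != C0 -> resolvent x C0 D \in DP x.1 F.
Proof. by move=> DF DC0; apply/DP_soleP; exists D. Qed.

End SoleClause.

Lemma singularE F z : singular F z.1 <-> minn (ldeg F z) (ldeg F (comp z)) = 1.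
Proof. by case: z => u [] /=; rewrite /singular /pos /neg /comp //= minnC. Qed.

Lemma one_singularE F z :
  one_singular F z.1 <-> ldeg F z = 1 /\ ldeg F (comp z) = 1.
Proof. by case: z => u [] /=; rewrite /one_singular /pos /neg /comp //=; split=> -[]. Qed.

Lemma singular_var F z : ldeg F z = 1 -> 0 < ldeg F (comp z) -> singular F z.1.
Proof. by move=> z1 cz; apply/singularE; rewrite z1; lia. Qed.

Lemma singularP F v : singular F v ->
  exists z, [/\ z.1 = v, ldeg F z = 1 & 0 < ldeg F (comp z)].
Proof.
rewrite /singular => h.
have [[h1 h2]|[h1 h2]] : (ldeg F (pos v) = 1 /\ 0 < ldeg F (neg v)) \/
  (ldeg F (neg v) = 1 /\ 0 < ldeg F (pos v)) by lia.
- by exists (pos v).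
- by exists (neg v).
Qed.

Lemma singind_one F : singind_eq F 1 -> exists v, singular F v /\ nonsingular (DP v F).
Proof.
move=> [[[|v [|? ?]] [[st ns] //= _]] _].
by exists v; split=> //; apply: (st 0).
Qed.

Lemma saturated_critical H E a : saturated H -> E \in H -> a.1 \in varF H -> a \notin E ->
  exists f, [/\ forall C, C \in H -> C != E -> satC f C, ~ satC f E & sat_lit f a].
Proof.
move=> [mu satd] EH aH aE; have [_ [unsat _]] := mu.
have [caE|caE] := boolP (comp a \in E).
  have [f [satf unsatE]] := MU_critical mu EH; exists f; split=> //.
  by apply/negPn/negP => na; apply: unsatE; exists (comp a); rewrite ?sat_lit_comp.
have naE : a.1 \notin varC E.
  apply/negP => /varCP [l lE /esym/same_var_lit [e|e]];
    by move: lE; rewrite e ?(negbTE aE) ?(negbTE caE).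
have [f satf] := satd E a EH aH naE.
have satH C : C \in H -> C != E -> satC f C.
  by move=> CH CE; apply: satf; rewrite in_fsetU in_fsetD1 CE CH.
have unsatE : ~ satC f E.
  move=> sE; apply: unsat; exists f => C CH.
  by have [->|CE] := eqVneq C E; [exact: sE|exact: satH].
exists f; split=> //.
have [|l] := satf (E `|` [fset a]); first by rewrite in_fsetU in_fset1 eqxx orbT.
rewrite in_fsetU in_fset1 => /orP [lE sl|/eqP -> //].
by case: unsatE; exists l.
Qed.

(* Take an assignment falsifying only E and satisfying a; making b false then
   satisfies all of H, as every clause containing b contains a. *)
Lemma saturated_mem H a b E : saturated H -> a.1 != b.1 ->
  (forall Z, Z \in H -> b \in Z -> a \in Z) -> (exists2 Z, Z \in H & b \in Z) ->
  E \in H -> comp b \in E -> a \in E.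
Proof.
move=> satH ab ba [Z0 Z0H bZ0] EH cbE; apply/negPn/negP => aE.
have [[_ [unsat _]] _] := satH.
have aH : a.1 \in varF H by apply/bigfcupP; exists Z0; rewrite ?Z0H ?mem_varC ?ba.
have [f [satf unsatE sa]] := saturated_critical satH EH aH aE.
apply: unsat; exists (upd f b.1 (~~ b.2)) => C CH.
have [cbC|cbC] := boolP (comp b \in C); first by exists (comp b); rewrite ?sat_upd_comp.
have CE : C != E by apply: contraNneq cbC => ->.
have [l lC sl] := satf C CH CE.
have [elb|lb] := eqVneq l b.
  exists a; first by apply: ba; rewrite // -elb.
  by rewrite sat_upd (negbTE ab).
exists l; rewrite // sat_upd_other //.
by apply: contraNneq cbC => <-.
Qed.

Lemma sDP_reach_nonsingular F G : nonsingular F -> sDP_reach F G -> G = F.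
Proof. by move=> ns; elim=> // G' v _ IH sv; case: (ns v); rewrite -IH. Qed.

Lemma sDP_reach_first F G : sDP_reach F G ->
  G = F \/ exists2 u, singular F u & sDP_reach (DP u F) G.
Proof.
elim=> [|G' v _ [->|[u su R]] sv]; [by left|right|right].
- by exists v => //; exact: sDP_refl.
- by exists u => //; exact: sDP_step R sv.
Qed.

Lemma iso_refl G : isomorphic G G.
Proof.
exists id; split; first by exists id.
split=> //; rewrite -[RHS]imfset_id; apply: eq_imfset => // C /=; exact: imfset_id.
Qed.

Lemma imfsetK (f g : lit -> lit) (C : clause) : cancel f g -> g @` (f @` C) = C.
Proof. by move=> fK; rewrite -imfset_comp -[RHS]imfset_id; apply: eq_imfset. Qed.

Lemma iso_sym G1 G2 : isomorphic G1 G2 -> isomorphic G2 G1.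
Proof.
move=> [f [[g fK gK] [fC <-]]]; exists g; split; first by exists f.
split=> [l|]; first by apply: (can_inj fK); rewrite fC !gK.
by rewrite -imfset_comp -[RHS]imfset_id; apply: eq_imfset => // C; exact: imfsetK.
Qed.

Lemma iso_trans G1 G2 G3 : isomorphic G1 G2 -> isomorphic G2 G3 -> isomorphic G1 G3.
Proof.
move=> [f [bf [fC <-]]] [h [bh [hC <-]]].
exists (h \o f); split; first exact: bij_comp.
split=> [l|]; first by rewrite /= fC hC.
by rewrite -imfset_comp; apply: eq_imfset => // C; exact: imfset_comp.
Qed.

Lemma other_singular F u :
  (exists v w, v <> w /\ singular F v /\ singular F w) -> exists2 w, w != u & singular F w.
Proof.
move=> [v [w [vw [sv sw]]]]; have [vu|] := eqVneq v u; last by exists v.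
by exists w => //; apply: contra_not_neq vw => wu; rewrite vu wu.
Qed.

(** * Singularity index one *)

Lemma singind_one_sole F : MU F -> singind_eq F 1 ->
  exists x C0, [/\ sole_clause F x C0, nonsingular (DP x.1 F) & 0 < ldeg F (comp x)].
Proof.
move=> mu /singind_one [_ [/singularP [x [<- x1 cx]] ns]].
by have [C0 hx] := sole_clause_of mu x1; exists x, C0.
Qed.

Section SingindOne.

Variables (F : clauseset) (x : lit) (C0 : clause).
Hypotheses (hx : sole_clause F x C0) (ns : nonsingular (DP x.1 F)).
Hypothesis cx : 0 < ldeg F (comp x).

Lemma sole_singular : singular F x.1.
Proof. exact: singular_var (sole_ldeg hx) cx. Qed.

Lemma DP_sole_in_sDP : in_sDP F (DP x.1 F).
Proof.
split; first by apply: sDP_step sole_singular; exact: sDP_refl.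
by split=> //; exact: MU_DP_sole hx.
Qed.

(* Otherwise y would stay singular after eliminating x.1. *)
Lemma sole_mem_ldeg1 (y : lit) : y.1 != x.1 -> ldeg F y = 1 -> 0 < ldeg F (comp y) -> y \in C0.
Proof.
move=> yx y1 cy; apply/negPn/negP => yC0; apply: (@ns y.1); apply/singularE.
rewrite (ldeg_DP_sole_notin hx yx yC0) y1.
have := ldeg_DP_sole_gt0 hx cx (yx : (comp y).1 != x.1) cy; lia.
Qed.

(* If x.1 were 1-singular, eliminating it would leave the degree of a singular
   literal of another variable at 1; a 1-singular u has a literal outside C0,
   whose degree stays 1. *)
Lemma not_one_singular : (exists2 w, w != x.1 & singular F w) ->
  forall u, singular F u -> ~ one_singular F u.
Proof.
move=> [w wx sw] u _; have [mu C0F _ _] := hx.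
have [->|ux] := eqVneq u x.1.
  move/one_singularE => [_ cx1].
  have [y [yw y1 cy]] := singularP sw.
  have yx : y.1 != x.1 by rewrite yw.
  apply: (@ns w); rewrite -yw; apply/singularE.
  have -> : ldeg (DP x.1 F) y = 1.
    have [yC0|yC0] := boolP (y \in C0); last by rewrite (ldeg_DP_sole_notin hx).
    by rewrite (ldeg_DP_sole_uniq hx yx yC0 (fun D => ldeg1_uniq y1 C0F yC0)) cx1.
  have := ldeg_DP_sole_gt0 hx cx (yx : (comp y).1 != x.1) cy; lia.
move/(one_singularE F (pos u)) => [z1 cz1].
have zx : (pos u).1 != x.1 := ux.
have czx : (comp (pos u)).1 != x.1 := ux.
apply: (@ns u); apply/(singularE (DP x.1 F) (pos u)).
have p1 : 0 < ldeg (DP x.1 F) (pos u) by apply/(ldeg_DP_sole_gt0 hx cx zx); rewrite z1.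
have p2 : 0 < ldeg (DP x.1 F) (comp (pos u)).
  by apply/(ldeg_DP_sole_gt0 hx cx czx); rewrite cz1.
have [zC0|zC0] := boolP (pos u \in C0).
  have czC0 := MU_clause_ok mu C0F zC0.
  rewrite (ldeg_DP_sole_notin hx czx czC0) cz1; lia.
rewrite (ldeg_DP_sole_notin hx zx zC0) z1; lia.
Qed.

Lemma singular_lit_in_sole : (exists2 w, w != x.1 & singular F w) ->
  forall y, singular_lit F y -> y \in C0.
Proof.
move=> ex y [sy y1]; have [_ _ xC0 _] := hx.
have cy : 0 < ldeg F (comp y) by move/singularE: sy; rewrite y1; lia.
have [e|yx] := eqVneq y.1 x.1; last exact: sole_mem_ldeg1.
case: (same_var_lit (esym e)) => [-> //|ey].
case: (not_one_singular ex sy); rewrite e.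
by apply/one_singularE; rewrite (sole_ldeg hx) -ey y1.
Qed.

(* In DP_{x.1}(F) every clause containing z contains y, as both come from C0. *)
Lemma sole_mem_saturated y z E : saturated (DP x.1 F) ->
  y.1 != x.1 -> z.1 != x.1 -> y.1 != z.1 -> y \in C0 -> z \in C0 -> ldeg F z = 1 ->
  E \in F -> comp z \in E -> y \in E.
Proof.
move=> sat yx zx yz yC0 zC0 z1 EF czE; have [mu C0F xC0 _] := hx.
have EC0 : E != C0.
  by apply: contraTneq czE => ->; exact: MU_clause_ok mu C0F zC0.
have cxE : comp x \notin E.
  apply/negP => cxE; have [_ _ clash_x] := sole_clash hx EF cxE.
  by move: zx; rewrite (clash_x _ zC0 czE) eqxx.
have zy (Z : clause) : Z \in DP x.1 F -> z \in Z -> y \in Z.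
  move=> /(DP_soleP hx) [D DF [DC0 ->]]; rewrite !in_resolvent // => /orP [zD|/andP [-> _]].
    by rewrite (ldeg1_uniq z1 C0F zC0 DF zD) eqxx in DC0.
  by rewrite yC0 orbT.
have zDP : exists2 Z, Z \in DP x.1 F & z \in Z.
  by apply/ldeg_gt0P/(ldeg_DP_sole_gt0 hx cx zx); rewrite z1.
have := saturated_mem sat yz zy zDP (resolvent_in_DP hx EF EC0).
by rewrite /resolvent (negbTE cxE); apply.
Qed.

Lemma singular_two : eventually_saturated F -> forall w, w != x.1 -> singular F w ->
  forall u, singular F u -> u = x.1 \/ u = w.
Proof.
move=> es w wx sw u su; have [mu C0F xC0 _] := hx.
have [->|ux] := eqVneq u x.1; first by left.
have [->|uw] := eqVneq u w; first by right.
have [y [yw y1 cy]] := singularP sw.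
have [z [zu z1 cz]] := singularP su.
have yx : y.1 != x.1 by rewrite yw.
have zx : z.1 != x.1 by rewrite zu.
have yC0 := sole_mem_ldeg1 yx y1 cy.
have zC0 := sole_mem_ldeg1 zx z1 cz.
have /ldeg_gt0P [E EF czE] := cz.
have yz : y.1 != z.1 by rewrite yw zu eq_sym.
have yE := sole_mem_saturated (es _ DP_sole_in_sDP) yx zx yz yC0 zC0 z1 EF czE.
have EC0 := ldeg1_uniq y1 C0F yC0 EF yE.
by move: (MU_clause_ok mu C0F zC0); rewrite -EC0 czE.
Qed.

End SingindOne.

(* Maps x to comp y and y to comp x, respecting complements. *)
Definition swap (x y l : lit) : lit :=
  if l.1 == x.1 then (y.1, l.2 (+) x.2 (+) ~~ y.2)
  else if l.1 == y.1 then (x.1, l.2 (+) y.2 (+) ~~ x.2) else l.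

Section Swap.

Variables x y : lit.
Hypothesis xy : x.1 != y.1.

Lemma swapK : involutive (swap x y).
Proof.
case: x y xy => vx bx [vy bY] /= nxy [u b]; rewrite /swap /=.
have [->|ux] /= := eqVneq u vx.
  by rewrite eq_sym (negbTE nxy) eqxx /=; congr pair; case: b; case: bx; case: bY.
have [->|uy] /= := eqVneq u vy; last by rewrite (negbTE ux) (negbTE uy).
by rewrite eqxx /=; congr pair; case: b; case: bx; case: bY.
Qed.

Lemma swap_comp l : swap x y (comp l) = comp (swap x y l).
Proof.
case: l => u b; rewrite /swap /comp /=.
by case: (u == x.1); last case: (u == y.1); rewrite //= -!addNb.
Qed.

Lemma swapC : swap x y =1 swap y x.
Proof. by move=> [u b]; rewrite /swap /=; have [->|] := eqVneq u x.1; rewrite ?(negbTE xy). Qed.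

Lemma swap_id l : l.1 != x.1 -> l.1 != y.1 -> swap x y l = l.
Proof. by move=> lx ly; rewrite /swap (negbTE lx) (negbTE ly). Qed.

Lemma swap_x : swap x y x = comp y.
Proof.
case: x y => vx bx [vy bY]; rewrite /swap /comp /= eqxx /=.
by congr pair; case: bx; case: bY.
Qed.

Lemma swap_y : swap x y y = comp x.
Proof.
case: x y xy => vx bx [vy bY] /= nxy; rewrite /swap /comp /= eq_sym (negbTE nxy) eqxx /=.
by congr pair; case: bx; case: bY.
Qed.

Lemma swap_cx : swap x y (comp x) = y.
Proof. by rewrite swap_comp swap_x compK. Qed.

Lemma swap_cy : swap x y (comp y) = x.
Proof. by rewrite swap_comp swap_y compK. Qed.

Lemma in_swap (S : clause) l : (l \in swap x y @` S) = (swap x y l \in S).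
Proof.
apply/imfsetP/idP => [[l' l'S ->]|h]; first by rewrite swapK.
by exists (swap x y l); rewrite ?swapK.
Qed.

End Swap.

(** * Two literals with the same sole clause *)

Definition comp_covers (F : clauseset) x y (C0 : clause) :=
  forall D, D \in F -> comp x \in D -> forall a, a \in C0 -> a != x -> a != y -> a \in D.

Lemma comp_covers_saturated F x y C0 : sole_clause F x C0 -> sole_clause F y C0 ->
  x.1 != y.1 -> saturated (DP y.1 F) -> 0 < ldeg F (comp y) -> comp_covers F x y C0.
Proof.
move=> hx hy xy sat cy D DF cxD a aC0 ax ay; have [mu C0F xC0 _] := hx.
have [_ _ yC0 _] := hy.
have acx : a != comp x by apply: contraTneq aC0 => ->; exact: MU_clause_ok mu C0F xC0.
have acy : a != comp y by apply: contraTneq aC0 => ->; exact: MU_clause_ok mu C0F yC0.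
exact: (sole_mem_saturated hy cy sat (neq_var_lit ay acy) xy (neq_var_lit ax acx) aC0 xC0
          (sole_ldeg hx) DF cxD).
Qed.

Lemma swap_resolvent_comp F x y C0 D : sole_clause F x C0 -> sole_clause F y C0 ->
  x.1 != y.1 -> D \in F -> D != C0 -> comp x \in D ->
  comp_covers F x y C0 -> swap x y @` resolvent x C0 D = resolvent y C0 D.
Proof.
move=> hx hy xy DF DC0 cxD cov; have [mu C0F xC0 _] := hx; have [_ _ yC0 _] := hy.
have yx : y.1 != x.1 by rewrite eq_sym.
have cyD : comp y \notin D.
  apply/negP => cyD; have [_ _ clash_x] := sole_clash hx DF cxD.
  by move: xy; rewrite -(clash_x _ yC0 cyD) eqxx.
have yD := sole_notin hy DF DC0.
have xD : x \notin D by rewrite -[x]compK; exact: MU_clause_ok mu DF cxD.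
have cyC0 := sole_comp_notin hy.
have [yx1 yx2] := var_lit_neq yx.
rewrite /resolvent cxD (negbTE cyD); apply/fsetP => l; rewrite in_swap // in_resolution.
have [lx|lx] := eqVneq l.1 x.1.
  case: (same_var_lit (esym lx)) => ->; rewrite ?swap_x ?swap_cx //.
    by rewrite (negbTE xD) (negbTE cyC0) (negbTE cyD) /= !andbF.
  by rewrite cxD yC0 yx1 yx2.
have [ly|ly] := eqVneq l.1 y.1.
  case: (same_var_lit (esym ly)) => ->; rewrite ?swap_y ?swap_cy //.
    by rewrite eqxx /= andbF (negbTE yD).
  by rewrite eqxx /= (negbTE cyD).
rewrite swap_id //; have [l1 l2] := var_lit_neq lx; have [l3 _] := var_lit_neq ly.
rewrite l1 l2 /=; case lC0: (l \in C0) => //=.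
by rewrite cov.
Qed.

Section TwoSole.

Variables (F : clauseset) (x y : lit) (C0 : clause).
Hypotheses (hx : sole_clause F x C0) (hy : sole_clause F y C0) (xy : x.1 != y.1).

Lemma swap_resolvent D : D \in F -> D != C0 ->
  comp_covers F x y C0 -> comp_covers F y x C0 ->
  swap x y @` resolvent x C0 D = resolvent y C0 D.
Proof.
move=> DF DC0 covx covy; have yx : y.1 != x.1 by rewrite eq_sym.
have [cxD|cxD] := boolP (comp x \in D); first exact: swap_resolvent_comp hx hy xy DF DC0 cxD covx.
have [cyD|cyD] := boolP (comp y \in D).
  rewrite -(swap_resolvent_comp hy hx yx DF DC0 cyD covy); apply: imfsetK => l.
  by rewrite (swapC yx) swapK.
have fixD l : l \in D -> swap x y l = l.
  move=> /mem_varC lD; apply: swap_id.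
    by apply: contraNneq (sole_var_notin hx DF DC0 cxD) => <-.
  by apply: contraNneq (sole_var_notin hy DF DC0 cyD) => <-.
rewrite /resolvent (negbTE cxD) (negbTE cyD); apply/fsetP => l; rewrite in_swap //.
apply/idP/idP => [sD|lD]; last by rewrite fixD.
by rewrite -(swapK xy l) fixD.
Qed.

Lemma DP_sole_iso : comp_covers F x y C0 -> comp_covers F y x C0 ->
  isomorphic (DP x.1 F) (DP y.1 F).
Proof.
move=> covx covy; exists (swap x y); split; first by exists (swap x y); exact: swapK.
split; first exact: swap_comp.
rewrite (DP_sole hx) (DP_sole hy) -imfset_comp; apply: eq_in_imfset => D.
by rewrite in_fsetD1 => /andP [DC0 DF] /=; exact: swap_resolvent.
Qed.

(* Outside C0 both eliminations leave degrees unchanged; inside C0 they raise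
   them to at least the degree of [comp x], resp. [comp y], which exceeds 1. *)
Lemma DP_sole_nonsingular_swap : nonsingular (DP x.1 F) ->
  1 < ldeg F (comp x) -> 1 < ldeg F (comp y) -> nonsingular (DP y.1 F).
Proof.
move=> ns cx cy u; have [mu C0F xC0 _] := hx.
have [->|uy] := eqVneq u y.1.
  by move/singularE; rewrite !(ldeg_DP_sole_var hy).
have [->|ux] := eqVneq u x.1.
  move/singularE; have := ldeg_DP_sole_ge hy xy xC0.
  by rewrite (ldeg_DP_sole_notin hy (xy : (comp x).1 != y.1) (sole_comp_notin hx)); lia.
have outside (t : lit) : t.1 = u -> comp t \notin C0 -> ~ singular (DP y.1 F) u.
  move=> tu ctC0; have ty : t.1 != y.1 by rewrite tu.
  have tx : t.1 != x.1 by rewrite tu.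
  rewrite -tu => /singularE sy; apply: (@ns t.1); apply/singularE.
  move: sy; rewrite (ldeg_DP_sole_notin hy (ty : (comp t).1 != y.1) ctC0).
  rewrite (ldeg_DP_sole_notin hx (tx : (comp t).1 != x.1) ctC0).
  have [tC0|tC0] := boolP (t \in C0).
    by have := ldeg_DP_sole_ge hy ty tC0; have := ldeg_DP_sole_ge hx tx tC0; lia.
  by rewrite (ldeg_DP_sole_notin hy ty tC0) (ldeg_DP_sole_notin hx tx tC0).
have [cpC0|cpC0] := boolP (comp (pos u) \in C0); last exact: (outside (pos u)).
by apply: (outside (comp (pos u))); last exact: MU_clause_ok mu C0F cpC0.
Qed.

End TwoSole.

Lemma ldeg_comp_gt1 F z : ldeg F z = 1 -> 0 < ldeg F (comp z) ->
  ~ one_singular F z.1 -> 1 < ldeg F (comp z).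
Proof.
move=> z1 cz not1; rewrite ltn_neqAle cz andbT.
by apply/eqP => e; apply: not1; apply/one_singularE.
Qed.

Lemma DP_other_singular F x C0 u : sole_clause F x C0 -> nonsingular (DP x.1 F) ->
  0 < ldeg F (comp x) -> eventually_saturated F -> u != x.1 -> singular F u ->
  nonsingular (DP u F) /\ isomorphic (DP x.1 F) (DP u F).
Proof.
move=> hx ns cx es ux su; have [mu C0F _ _] := hx.
have [y [yu y1 cy]] := singularP su; subst u.
have yC0 := sole_mem_ldeg1 hx ns cx ux y1 cy.
have hy : sole_clause F y C0 by split=> // D DF yD; exact: ldeg1_uniq y1 C0F yC0 DF yD.
have xy : x.1 != y.1 by rewrite eq_sym.
have ex : exists2 w, w != x.1 & singular F w by exists y.1.
have cx2 := ldeg_comp_gt1 (sole_ldeg hx) cx (not_one_singular hx ns cx ex (sole_singular hx cx)).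
have cy2 := ldeg_comp_gt1 y1 cy (not_one_singular hx ns cx ex su).
have nsy := DP_sole_nonsingular_swap hx hy xy ns cx2 cy2.
split=> //; apply: (DP_sole_iso hx hy xy).
- exact: comp_covers_saturated hx hy xy (es _ (DP_sole_in_sDP hy nsy (ltnW cy2))) (ltnW cy2).
- exact: comp_covers_saturated hy hx ux (es _ (DP_sole_in_sDP hx ns cx)) cx.
Qed.

Lemma in_sDP_iso F x C0 G : sole_clause F x C0 -> nonsingular (DP x.1 F) ->
  0 < ldeg F (comp x) -> eventually_saturated F -> in_sDP F G -> isomorphic (DP x.1 F) G.
Proof.
move=> hx ns cx es [/sDP_reach_first [->|[u su R]] [nsG _]].
  by case: (nsG _ (sole_singular hx cx)).
have [ex|ux] := eqVneq u x.1.
  by rewrite ex in R; rewrite (sDP_reach_nonsingular ns R); exact: iso_refl.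
have [nsu iso] := DP_other_singular hx ns cx es ux su.
by rewrite (sDP_reach_nonsingular nsu R).
Qed.

Theorem corollary69 (F : clauseset) :
  MU F -> singind_eq F 1 ->
  ((exists v w, v <> w /\ singular F v /\ singular F w) ->
     (forall v, singular F v -> non_one_singular F v) /\
     (exists2 C, C \in F & forall x, singular_lit F x -> x \in C) /\
     (eventually_saturated F ->
        exists v w, [/\ v <> w, singular F v, singular F w &
                        forall u, singular F u -> u = v \/ u = w]))
  /\
  (eventually_saturated F ->
     forall G1 G2, in_sDP F G1 -> in_sDP F G2 -> isomorphic G1 G2).
Proof.
move=> mu si; have [x [C0 [hx ns cx]]] := singind_one_sole mu si.
split=> [two|es G1 G2 h1 h2]; last first.
  exact: iso_trans (iso_sym (in_sDP_iso hx ns cx es h1)) (in_sDP_iso hx ns cx es h2).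
have [w wx sw] := other_singular x.1 two.
have ex : exists2 w, w != x.1 & singular F w by exists w.
split; [|split].
- by move=> u su; split; last exact: (not_one_singular hx ns cx ex su).
- by exists C0; [case: hx|exact: singular_lit_in_sole hx ns cx ex].
- move=> es; exists x.1, w; split.
  + by apply/eqP; rewrite eq_sym.
  + exact: sole_singular hx cx.
  + exact: sw.
  + exact: (singular_two hx ns cx es wx sw).
Qed.
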